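(* Let $\delta>0$, data $(\mathbf{x}_i,y_i)$, $i=1,\dots,n$, with $\mathbf{x}_i\in\mathbb{R}^p$, $y_i\in\{-1,1\}$, and let $P_{\lambda_1,\lambda_2}(\boldsymbol\beta)=\sum_{j=1}^p P_{\lambda_1}(|\beta_j|)+\frac{\lambda_2}{2}\|\boldsymbol\beta\|_2^2$ be a penalty function. Define $$R(\boldsymbol\beta,\beta_0)=\frac1n\sum_{i=1}^n v\big(y_i(\beta_0+\mathbf{x}_i^\top\boldsymbol\beta)\big)+P_{\lambda_1,\lambda_2}(\boldsymbol\beta),\qquad R(\boldsymbol\beta,\beta_0\mid\delta)=\frac1n\sum_{i=1}^n B_\delta\big(y_i(\beta_0+\mathbf{x}_i^\top\boldsymbol\beta)\big)+P_{\lambda_1,\lambda_2}(\boldsymbol\beta),$$ where $v(t)=(1-t)_+$. Then $$\inf_{(\boldsymbol\beta,\beta_0)}R(\boldsymbol\beta,\beta_0)\le\inf_{(\boldsymbol\beta,\beta_0)}R(\boldsymbol\beta,\beta_0\mid\delta)\le\inf_{(\boldsymbol\beta,\beta_0)}R(\boldsymbol\beta,\beta_0)+\delta.$$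
   Context: $B_\delta$ (the BernSVM loss) is defined by $B_\delta(t)=(1-t)_+$ if $|t-1|>\delta$ and $B_\delta(t)=g_\delta(t)=\frac{1}{8\delta^{3}}\{\frac{(1-t+\delta)^{4}}{2}-(1-t-\delta)(1-t+\delta)^{3}\}$ if $|t-1|\le\delta$. The penalty $P_{\lambda_1}$ may be e.g. $\lambda_1|\beta_j|$, $\lambda_1 w_j|\beta_j|$, SCAD or MCP. *)

From HB Require Import structures.
From mathcomp Require Import all_boot all_order all_algebra.
From mathcomp Require Import all_classical all_reals.
From mathcomp Require Import ereal.
Set Implicit Arguments. Unset Strict Implicit. Unset Printing Implicit Defensive.
Import Order.TTheory GRing.Theory Num.Theory.
Local Open Scope ring_scope.

Section Defs.
Variable R : realType.

Definition hinge (t : R) : R := Num.max 0 (1 - t).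

Definition gdelta (d t : R) : R :=
  (8 * d ^+ 3)^-1 * ((1 - t + d) ^+ 4 / 2 - (1 - t - d) * (1 - t + d) ^+ 3).

Definition bern (d t : R) : R :=
  if d < `|t - 1| then hinge t else gdelta d t.

Definition penalty (p : nat) (P1 : R -> R) (l2 : R) (b : 'I_p -> R) : R :=
  \sum_(j < p) P1 `|b j| + l2 / 2 * \sum_(j < p) b j ^+ 2.

Definition risk (n p : nat) (loss : R -> R) (X : 'I_n -> 'I_p -> R)
  (y : 'I_n -> R) (P1 : R -> R) (l2 : R) (b : 'I_p -> R) (b0 : R) : R :=
  n%:R^-1 * \sum_(i < n) loss (y i * (b0 + \sum_(j < p) X i j * b j))
  + penalty P1 l2 b.

End Defs.

From HB Require Import structures.
From mathcomp Require Import all_boot all_order all_algebra.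
From mathcomp Require Import all_classical all_reals.
From mathcomp Require Import ereal.
From mathcomp Require Import ring lra.
Set Implicit Arguments. Unset Strict Implicit. Unset Printing Implicit Defensive.
Import Order.TTheory GRing.Theory Num.Theory.
Local Open Scope ring_scope.
Local Open Scope classical_set_scope.

(* The BernSVM loss is squeezed pointwise between the hinge loss and the hinge
   loss plus delta: outside the band |1 - t| <= delta the two coincide, and
   inside it, with a = 1 - t + delta >= 0 and b = delta - (1 - t) >= 0, one has
   16 delta^3 g_delta(t) = a^3 (a + 2b), which lies between
   16 delta^3 (1 - t) = (a - b)(a + b)^3 and 16 delta^4 = (a + b)^4.
   Averaging over the sample and adding the penalty preserves the squeeze, and
   so does taking infima. *)

Section BernsteinLoss.
Variable R : realType.
Implicit Types d t : R.

Lemma gdeltaE d t : 0 < d ->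
  gdelta d t = (1 - t + d) ^+ 3 * (3 * d - (1 - t)) / (16 * d ^+ 3).
Proof.
move=> d_gt0; rewrite /gdelta; field; exact: lt0r_neq0.
Qed.

Lemma hinge_ge0 t : 0 <= hinge t.
Proof. by rewrite le_max lexx. Qed.

Lemma hinge_le_gdelta d t : 0 < d -> `|t - 1| <= d -> hinge t <= gdelta d t.
Proof.
move=> d_gt0; rewrite ler_norml => /andP[lo hi]; rewrite gdeltaE //.
have d3_gt0 : 0 < 16 * d ^+ 3 by rewrite mulr_gt0 // exprn_gt0.
set a := 1 - t + d; set b := d - (1 - t).
have [a_ge0 b_ge0] : 0 <= a /\ 0 <= b by rewrite /a /b; split; lra.
have -> : 3 * d - (1 - t) = a + 2 * b by rewrite /a /b; ring.
rewrite ge_max !ler_pdivlMr // mul0r; apply/andP; split.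
  by rewrite mulr_ge0 ?exprn_ge0 //; lra.
rewrite -subr_ge0.
have -> : a ^+ 3 * (a + 2 * b) - (1 - t) * (16 * d ^+ 3) = b ^+ 3 * (2 * a + b).
  by rewrite /a /b; ring.
by rewrite mulr_ge0 ?exprn_ge0 //; lra.
Qed.

Lemma gdelta_le d t : 0 < d -> `|t - 1| <= d -> gdelta d t <= d.
Proof.
move=> d_gt0; rewrite ler_norml => /andP[lo hi]; rewrite gdeltaE //.
have d3_gt0 : 0 < 16 * d ^+ 3 by rewrite mulr_gt0 // exprn_gt0.
set a := 1 - t + d; set b := d - (1 - t).
have [a_ge0 b_ge0] : 0 <= a /\ 0 <= b by rewrite /a /b; split; lra.
have -> : 3 * d - (1 - t) = a + 2 * b by rewrite /a /b; ring.
rewrite ler_pdivrMr // -subr_ge0.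
have -> : d * (16 * d ^+ 3) - a ^+ 3 * (a + 2 * b)
        = 2 * a ^+ 3 * b + 6 * a ^+ 2 * b ^+ 2 + 4 * a * b ^+ 3 + b ^+ 4.
  by rewrite /a /b; ring.
by rewrite !addr_ge0 ?mulr_ge0 ?exprn_ge0.
Qed.

Lemma hinge_le_bern d t : 0 < d -> hinge t <= bern d t.
Proof.
move=> d_gt0; rewrite /bern; case: ltP => // band.
exact: hinge_le_gdelta.
Qed.

Lemma bern_le_hingeD d t : 0 < d -> bern d t <= hinge t + d.
Proof.
move=> d_gt0; rewrite /bern; case: ltP => band; first by rewrite lerDl ltW.
by rewrite (le_trans (gdelta_le d_gt0 band)) // lerDr hinge_ge0.
Qed.

End BernsteinLoss.

Section EmpiricalRisk.
Context {R : realType} {n p : nat} {X : 'I_n -> 'I_p -> R} {y : 'I_n -> R}.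
Context {P1 : R -> R} {l2 : R} {b : 'I_p -> R} {b0 : R}.

Lemma le_risk (f g : R -> R) : (forall t, f t <= g t) ->
  risk f X y P1 l2 b b0 <= risk g X y P1 l2 b b0.
Proof.
move=> le_fg; rewrite /risk lerD2r ler_wpM2l ?invr_ge0 //.
by apply: ler_sum => i _; exact: le_fg.
Qed.

(* With no sample (n = 0) the average is 0 (because 0^-1 = 0), so only an
   inequality holds in general. *)
Lemma risk_addr_le (f : R -> R) (c : R) : 0 <= c ->
  risk (fun t => f t + c) X y P1 l2 b b0 <= risk f X y P1 l2 b b0 + c.
Proof.
move=> c_ge0; rewrite /risk -addrAC lerD2r big_split /= mulrDr lerD2l.
rewrite sumr_const card_ord -(mulr_natr c) mulrCA.
have [->|n_gt0] := posnP n; first by rewrite invr0 mul0r mulr0.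
by rewrite mulVf ?mulr1 // pnatr_eq0 -lt0n.
Qed.

End EmpiricalRisk.

Lemma ereal_inf_range_le_addr (T : Type) (R : realType) (F G : T -> R) (c : R) :
  (forall x, F x <= G x + c) ->
  (ereal_inf (range (fun x => (F x)%:E))
     <= ereal_inf (range (fun x => (G x)%:E)) + c%:E)%E.
Proof.
move=> le_FG; rewrite -leeBlDr //; apply: le_ereal_inf_tmp => _ [x _ <-].
rewrite leeBlDr // -EFinD.
apply: le_trans (ereal_inf_lbound _) _; first by exists x.
by rewrite lee_fin.
Qed.

Theorem proposition2 (R : realType) (d : R) (n p : nat)
  (X : 'I_n -> 'I_p -> R) (y : 'I_n -> R) (P1 : R -> R) (l2 : R) :
  0 < d ->
  (forall i, y i = 1 \/ y i = -1) ->
  (ereal_inf (range (fun bb : ('I_p -> R) * R =>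
       (risk (@hinge R) X y P1 l2 bb.1 bb.2)%:E))
   <= ereal_inf (range (fun bb : ('I_p -> R) * R =>
       (risk (@bern R d) X y P1 l2 bb.1 bb.2)%:E)))%E /\
  (ereal_inf (range (fun bb : ('I_p -> R) * R =>
       (risk (@bern R d) X y P1 l2 bb.1 bb.2)%:E))
   <= ereal_inf (range (fun bb : ('I_p -> R) * R =>
       (risk (@hinge R) X y P1 l2 bb.1 bb.2)%:E)) + d%:E)%E.
Proof.
move=> d_gt0 _; split.
- rewrite -[leRHS]adde0; apply: ereal_inf_range_le_addr => bb.
  by rewrite addr0; exact: le_risk (fun t => hinge_le_bern t d_gt0).
- apply: ereal_inf_range_le_addr => bb.
  apply: le_trans _ (risk_addr_le (@hinge R) (ltW d_gt0)).
  exact: le_risk (fun t => bern_le_hingeD t d_gt0).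
Qed.
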